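(* (a) Let $\alpha\in(\tfrac12,1]$ be rational and $\lambda\in\mathbb N$, and let $k=\lceil \frac{\lambda\alpha}{2\alpha-1}\rceil$. For every profile $P$, every ranking $r$ that Approval Voting may output on $P$ (under any tie-breaking), and every group $N'$ that is $(\alpha,\lambda)$-significant in $P$, we have $\mathrm{avg}(N',r_{\le k})\ge\lambda$. (b) For every rational $\alpha\in(\tfrac12,1]$ and $\lambda\in\mathbb N$, with $k'=\lceil \frac{\lambda\alpha}{2\alpha-1}\rceil-1$, there exist a profile $P$, a group $N'$ that is $(\alpha,\lambda)$-significant in $P$, and a ranking $r$ that Approval Voting may output on $P$ (for some tie-breaking) such that $\mathrm{avg}(N',r_{\le k'})<\lambda$. (c) For every rational $\alpha\in(0,\tfrac12)$, every $\lambda\in\mathbb N$ and every $k\in\mathbb N$, there exist a profile $P$, a group $N'$ that is $(\alpha,\lambda)$-significant in $P$, and a ranking $r$ that Approval Voting may output on $P$ (for some tie-breaking) such that $\mathrm{avg}(N',r_{\le k})<\lambda$. In particular, for $\alpha<\tfrac12$ Approval Voting does not satisfy $\kappa$-group representation for any function $\kappa$.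
   Context: Let $N=[n]$ be a finite set of voters and $A$ a finite set of $m$ alternatives; a profile $P=(A_1,\dots,A_n)$ gives each voter $i$ a non-empty approval set $A_i\subseteq A$. $N_a=\{i: a\in A_i\}$ and $|N_a|$ is the approval score of $a$. A ranking $r=(r_1,\dots,r_m)$ is a linear order of $A$, $r_{\le k}=\{r_1,\dots,r_k\}$, with the convention $r_{\le k}=A$ for $k\ge m$. Approval Voting outputs any ranking with $|N_{r_1}|\ge\dots\ge|N_{r_m}|$ (ties broken arbitrarily). For nonempty $N'\subseteq N$ and $S\subseteq A$, $\mathrm{avg}(N',S)=\frac1{|N'|}\sum_{i\in N'}|A_i\cap S|$. The cohesiveness of $N'$ is $\lambda(N')=|\bigcap_{i\in N'}A_i|$; $N'$ is $(\alpha,\lambda)$-significant in $P$ if $|N'|=\lceil\alpha n\rceil$ and $\lambda(N')\ge\lambda$. Given $\kappa:((0,1]\cap\mathbb Q)\times\mathbb N\to\mathbb N$, a ranking rule satisfies $\kappa$-group representation if for every profile $P$, every output ranking $r$ (under every tie-breaking), every rational $\alpha\in(0,1]$, every $\lambda\in\mathbb N$ and every $(\alpha,\lambda)$-significant $N'$, $\mathrm{avg}(N',r_{\le\kappa(\alpha,\lambda)})\ge\lambda$. *)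

From HB Require Import structures.
From mathcomp Require Import all_boot all_order all_algebra.
Set Implicit Arguments. Unset Strict Implicit. Unset Printing Implicit Defensive.
Import Order.TTheory GRing.Theory Num.Theory.

Definition profile (n m : nat) := 'I_n -> {set 'I_m}.

Definition valid_profile n m (P : profile n m) : Prop :=
  forall i : 'I_n, P i != set0.

Definition supporters n m (P : profile n m) (a : 'I_m) : {set 'I_n} :=
  [set i | a \in P i].
Definition score n m (P : profile n m) (a : 'I_m) : nat := #|supporters P a|.

Definition is_ranking m (r : seq 'I_m) : Prop := perm_eq r (enum 'I_m).

(* r_{<= k}; for k >= m this is the whole set of alternatives. *)
Definition top_k m (r : seq 'I_m) (k : nat) : {set 'I_m} := [set x in take k r].

(* Approval Voting may output r (under some tie-breaking) iff r is a ranking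
   with non-increasing approval scores. *)
Definition AV_output n m (P : profile n m) (r : seq 'I_m) : Prop :=
  is_ranking r /\ sorted (fun a b => score P b <= score P a)%N r.

Definition avg n m (P : profile n m) (N' : {set 'I_n}) (S : {set 'I_m}) : rat :=
  ((\sum_(i in N') #|P i :&: S|)%:R / (#|N'|)%:R)%R.

Definition cohesiveness n m (P : profile n m) (N' : {set 'I_n}) : nat :=
  #|\bigcap_(i in N') P i|.

Definition significant n m (P : profile n m) (alpha : rat) (lam : nat)
    (N' : {set 'I_n}) : Prop :=
  (#|N'|%:Z = Num.ceil (alpha * n%:R))%R /\ (lam <= cohesiveness P N')%N.

Definition AV_group_representation (kappa : rat -> nat -> nat) : Prop :=
  forall (n m : nat) (P : profile n m) (r : seq 'I_m),
    (0 < n)%N -> valid_profile P -> AV_output P r ->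
    forall (alpha : rat) (lam : nat) (N' : {set 'I_n}),
      (0 < alpha)%R -> (alpha <= 1)%R -> significant P alpha lam N' ->
      (lam%:R <= avg P N' (top_k r (kappa alpha lam)))%R.

From HB Require Import structures.
From mathcomp Require Import all_boot all_order all_algebra zify ring lra.
Import Order.TTheory GRing.Theory Num.Theory.

(* Upper bound: if all [lam] common approvals of the group [N'] lie in the top
   [k], every member approves [lam] of them.  Otherwise some common approval [c]
   is ranked below the top [k]; Approval Voting sorts by score and [c] has score
   at least [|N'|], so every top-[k] alternative does too.  As each of the
   [n - |N'|] outsiders approves at most [k] of them, the group approves at least
   [k (2|N'| - n)] top-[k] alternatives in total, which is [lam |N'|] or more for
   [k = ceil (lam alpha / (2 alpha - 1))].

   Lower bounds: write [alpha = s / n].  In [decoy_profile] the group's [lam]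
   common alternatives have score [s] and the [K] decoys score [t + (n - s)], so
   with [t = 2s - n] (or [t = 0] when [alpha < 1/2]) the decoys may be ranked
   first, and the group's average over the top [j <= K] is only [t j / s]. *)

Lemma absz_ceil_ge (R : archiRealDomainType) (x : R) :
  (0 <= x)%R -> (x <= `|Num.ceil x|%:R)%R.
Proof.
move=> x_ge0; have ceil_ge0 : (0 <= Num.ceil x)%R.
  by rewrite ceil_ge0 (lt_le_trans _ x_ge0) // ltrN10.
by rewrite natr_absz ger0_norm // ceil_ge.
Qed.

Lemma absz_ceil_pred_lt (R : archiRealDomainType) (x : R) :
  (0 < x)%R -> ((`|Num.ceil x|.-1)%:R < x)%R.
Proof.
move=> x_gt0; have ceil_gt0 : (0 < Num.ceil x)%R by rewrite ceil_gt0.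
have ceil_eq : Num.ceil x = (`|Num.ceil x|.-1%:Z + 1)%R.
  by rewrite addrC -intS prednK ?gtz0_abs // absz_gt0 lt0r_neq0.
by have := ceilB1_lt x; rewrite {1}ceil_eq addrK.
Qed.

Lemma ceil_natr (s : nat) : Num.ceil (s%:R : rat)%R = s.
Proof. exact: (intrKceil (Posz s)). Qed.

Lemma card_ord_lt {n s} : (s <= n)%N -> #|[set i : 'I_n | i < s]| = s.
Proof.
move=> le_sn; have widen_inj : injective (widen_ord le_sn).
  by move=> i j /(congr1 val) eq_ij; apply: val_inj.
have -> : [set i : 'I_n | i < s] = widen_ord le_sn @: [set: 'I_s].
  apply/setP => i; rewrite inE; apply/idP/imsetP => [lt_is | [j _ ->]].
    by exists (Ordinal lt_is) => //; apply: val_inj.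
  exact: (ltn_ord j).
by rewrite card_imset // cardsT card_ord.
Qed.

Lemma card_ord_ge {n s} : (s <= n)%N -> #|[set i : 'I_n | s <= i]| = n - s.
Proof.
move=> le_sn; have -> : [set i : 'I_n | s <= i] = ~: [set i : 'I_n | i < s].
  by apply/setP => i; rewrite !inE -leqNgt.
by rewrite cardsCs setCK card_ord card_ord_lt.
Qed.

Lemma top_k_enum {m} j : top_k (enum 'I_m) j = [set a : 'I_m | a < j].
Proof.
apply/setP => a; rewrite !inE -(mem_map val_inj) map_take val_enum_ord.
by rewrite take_iota mem_iota add0n leq_min ltn_ord andbT.
Qed.

Lemma card_setI_sum {m} (A S : {set 'I_m}) : #|A :&: S| = \sum_(a in S) (a \in A).
Proof.
rewrite -sum1_card big_mkcond [RHS]big_mkcond /=; apply: eq_bigr => a _.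
by rewrite inE; case: (a \in A); case: (a \in S).
Qed.

Lemma score_sum {n m} (P : profile n m) a : score P a = \sum_(i : 'I_n) (a \in P i).
Proof.
rewrite /score /supporters -sum1_card big_mkcond; apply: eq_bigr => i _.
by rewrite inE; case: (a \in P i).
Qed.

Lemma sum_card_approvals {n m} (P : profile n m) (S : {set 'I_m}) :
  \sum_(i : 'I_n) #|P i :&: S| = \sum_(a in S) score P a.
Proof.
rewrite (eq_bigr (fun i => \sum_(a in S) (a \in P i))); last first.
  by move=> i _; apply: card_setI_sum.
by rewrite exchange_big; apply: eq_bigr => a _; rewrite score_sum.
Qed.

Lemma AV_output_score_take_drop {n m} {P : profile n m} {r k a c} :
  AV_output P r -> a \in take k r -> c \in drop k r -> (score P c <= score P a)%N.
Proof.
move=> [_ sorted_r] a_take c_drop.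
have score_trans : transitive (fun a b : 'I_m => score P b <= score P a).
  by move=> b a' d /= le_ba le_db; apply: leq_trans le_db le_ba.
move: sorted_r; rewrite (sorted_pairwise score_trans) -(cat_take_drop k r).
by rewrite pairwise_cat => /and3P[/allrelP take_drop _ _]; apply: take_drop.
Qed.

Lemma card_top_k {m} {r : seq 'I_m} {k} : is_ranking r -> (k <= m)%N -> #|top_k r k| = k.
Proof.
move=> rank_r le_km; have size_r : size r = m by rewrite (perm_size rank_r) size_enum_ord.
have uniq_r : uniq r by rewrite (perm_uniq rank_r) enum_uniq.
by rewrite cardsE (card_uniqP (take_uniq _ uniq_r)) size_takel // size_r.
Qed.

Lemma sum_approvals_top_k_ge {n m} {P : profile n m} {r k} {N' : {set 'I_n}} {c} :
  AV_output P r -> c \in drop k r -> (#|N'| <= score P c)%N ->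
  (k * (2 * #|N'| - n) <= \sum_(i in N') #|P i :&: top_k r k|)%N.
Proof.
move=> AV_r c_drop le_Nc; set T := top_k r k; set s := #|N'|.
have [rank_r _] := AV_r.
have le_km : (k <= m)%N.
  have : (0 < size (drop k r))%N by case: (drop k r) c_drop.
  by rewrite size_drop (perm_size rank_r) size_enum_ord subn_gt0 => /ltnW.
have card_T : #|T| = k by apply: card_top_k.
have score_T a : a \in T -> (s <= score P a)%N.
  rewrite inE => a_take.
  exact: leq_trans le_Nc (AV_output_score_take_drop AV_r a_take c_drop).
have total_ge : (k * s <= \sum_i #|P i :&: T|)%N.
  by rewrite sum_card_approvals -card_T -sum_nat_const; apply: leq_sum.
have outside_le : (\sum_(i in ~: N') #|P i :&: T| <= (n - s) * k)%N.
  apply: (@leq_trans (\sum_(i in ~: N') k)).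
    by apply: leq_sum => i _; rewrite -card_T subset_leq_card // subsetIr.
  by rewrite sum_nat_const cardsCs setCK card_ord.
have split_sum : \sum_i #|P i :&: T| =
    (\sum_(i in N') #|P i :&: T| + \sum_(i in ~: N') #|P i :&: T|)%N.
  by rewrite (bigID (mem N')) /=; congr (_ + _); apply: eq_bigl => i; rewrite inE.
have le_sn : (s <= n)%N by rewrite -[leqRHS]card_ord max_card.
move: total_ge outside_le; rewrite split_sum mulnBr mulnBl; nia.
Qed.

Lemma group_approvals_top_k_ge {n m} {P : profile n m} {r k lam} {N' : {set 'I_n}} :
  AV_output P r -> (lam <= cohesiveness P N')%N ->
  (lam * #|N'| <= k * (2 * #|N'| - n))%N ->
  (lam * #|N'| <= \sum_(i in N') #|P i :&: top_k r k|)%N.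
Proof.
move=> AV_r le_lam_coh le_lam_k; have [rank_r _] := AV_r.
have [common_top | /subsetPn[c c_common c_top]] :=
  boolP (\bigcap_(i in N') P i \subset top_k r k).
  rewrite mulnC -sum_nat_const; apply: leq_sum => i i_N.
  apply: leq_trans le_lam_coh _; apply: subset_leq_card.
  by rewrite subsetI common_top (bigcap_inf _ i_N).
have c_drop : c \in drop k r.
  have : c \in r by rewrite (perm_mem rank_r) mem_enum.
  rewrite -{1}(cat_take_drop k r) mem_cat => /orP[c_take | //].
  by move: c_top; rewrite inE c_take.
apply: leq_trans le_lam_k (sum_approvals_top_k_ge AV_r c_drop _).
rewrite /score; apply: subset_leq_card; apply/subsetP => i i_N; rewrite inE.
exact: (subsetP (bigcap_inf _ i_N) c c_common).
Qed.

Lemma AV_avg_top_ceil_ge (alpha : rat) (lam : nat) :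
  (1 / 2 < alpha)%R -> (alpha <= 1)%R ->
  let k := `|Num.ceil (lam%:R * alpha / (2 * alpha - 1))|%N in
  forall (n m : nat) (P : profile n m) (r : seq 'I_m) (N' : {set 'I_n}),
    (0 < n)%N -> valid_profile P -> AV_output P r ->
    significant P alpha lam N' ->
    (lam%:R <= avg P N' (top_k r k))%R.
Proof.
move=> gt_alpha_half le_alpha1 k n m P r N' n_gt0 _ AV_r [card_N' le_lam_coh].
set s := #|N'| in card_N' *.
have alpha_n_le_s : (alpha * n%:R <= s%:R :> rat)%R.
  by rewrite -[(s%:R)%R]/((Posz s)%:~R : rat)%R card_N' ceil_ge.
have s_gt0 : (0 < s%:R :> rat)%R.
  by apply: lt_le_trans alpha_n_le_s; rewrite mulr_gt0 ?ltr0n //; lra.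
have lam_le_k : (lam%:R * alpha <= k%:R * (2 * alpha - 1) :> rat)%R.
  rewrite -ler_pdivrMr; last lra.
  by apply: absz_ceil_ge; rewrite divr_ge0 ?mulr_ge0 ?ler0n //; lra.
have le_n_2s : (n <= 2 * s)%N.
  by rewrite -(ler_nat rat) natrM; nra.
rewrite /avg ler_pdivlMr // -natrM ler_nat.
apply: group_approvals_top_k_ge => //.
rewrite -(ler_nat rat) !natrM natrB // natrM.
have k_ge0 : (0 <= k%:R :> rat)%R := ler0n _ k.
(* nra finds alpha (k (2s - n) - lam s) = k (s - alpha n) + s (k (2 alpha - 1) - lam alpha). *)
nra.
Qed.

(* Alternatives below [K] are decoys, the others are the common approvals of
   the group formed by the first [s] voters. *)
Definition decoy_profile n K lam s t : profile n (K + lam) := fun i =>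
  if i < t then setT
  else if i < s then [set a : 'I_(K + lam) | K <= a]
  else [set a : 'I_(K + lam) | a < K].

Section DecoyProfile.

Variables n K lam s t : nat.
Hypotheses (le_ts : t <= s) (le_sn : s <= n).

Let P := decoy_profile n K lam s t.
Let group := [set i : 'I_n | i < s].

Lemma decoy_mem i a :
  (a \in P i) = (i < t) || (if i < s then K <= a else a < K).
Proof. by rewrite /P /decoy_profile; case: (i < t); case: (i < s); rewrite !inE. Qed.

Lemma decoy_score (a : 'I_(K + lam)) : score P a = if a < K then t + (n - s) else s.
Proof.
rewrite /score /supporters; case: ifP => lt_aK.
  have -> : [set i | a \in P i] =
            [set i : 'I_n | i < t] :|: [set i : 'I_n | s <= i].
    by apply/setP => i; rewrite !inE decoy_mem lt_aK; case: ifP; lia.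
  rewrite cardsU (card_ord_lt (leq_trans le_ts le_sn)) (card_ord_ge le_sn).
  suff -> : [set i : 'I_n | i < t] :&: [set i : 'I_n | s <= i] = set0.
    by rewrite cards0 subn0.
  by apply/setP => i; rewrite !inE; lia.
have -> : [set i | a \in P i] = [set i : 'I_n | i < s].
  by apply/setP => i; rewrite !inE decoy_mem lt_aK; case: ifP; lia.
exact: card_ord_lt.
Qed.

Lemma decoy_valid : 0 < lam -> (s < n -> 0 < K) -> valid_profile P.
Proof.
move=> lam_gt0 K_gt0 i; apply/set0Pn; case: (ltnP i s) => [lt_is | le_si].
  have lt_K : K < K + lam by rewrite -[X in X < _]addn0 ltn_add2l.
  by exists (Ordinal lt_K); rewrite decoy_mem lt_is leqnn orbT.
have lt_0K : 0 < K by apply: K_gt0; apply: leq_trans (ltn_ord i).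
have lt_0 : 0 < K + lam by apply: leq_trans lt_0K (leq_addr _ _).
by exists (Ordinal lt_0); rewrite decoy_mem (ltnNge i s) le_si /= lt_0K orbT.
Qed.

Lemma decoy_AV_output : s <= t + (n - s) -> AV_output P (enum 'I_(K + lam)).
Proof.
move=> decoys_first; split; first exact: perm_refl.
have enum_lt : sorted (fun a b : 'I_(K + lam) => a < b) (enum 'I_(K + lam)).
  by have := iota_ltn_sorted 0 (K + lam); rewrite -val_enum_ord sorted_map.
apply: sub_sorted enum_lt => a b /= lt_ab; rewrite !decoy_score.
by case: ifP; case: ifP; lia.
Qed.

Lemma decoy_cohesiveness : lam <= cohesiveness P group.
Proof.
have common_sub : [set a : 'I_(K + lam) | K <= a] \subset \bigcap_(i in group) P i.
  apply/subsetP => a; rewrite inE => le_Ka; apply/bigcapP => i; rewrite inE => lt_is.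
  by rewrite decoy_mem lt_is le_Ka orbT.
by apply: leq_trans (subset_leq_card common_sub); rewrite card_ord_ge ?leq_addr ?addKn.
Qed.

Lemma decoy_avg j :
  j <= K -> avg P group (top_k (enum 'I_(K + lam)) j) = ((t * j)%:R / s%:R)%R.
Proof.
move=> le_jK; rewrite /avg card_ord_lt // top_k_enum.
suff -> : \sum_(i in group) #|P i :&: [set a : 'I_(K + lam) | a < j]| =
          \sum_(i in [set i : 'I_n | i < t]) j.
  by rewrite sum_nat_const card_ord_lt ?(leq_trans le_ts).
rewrite big_mkcond [RHS]big_mkcond; apply: eq_bigr => i _; rewrite !inE.
case: (ltnP i t) => [lt_it | le_ti].
  rewrite (leq_trans lt_it le_ts).
  have -> : P i :&: [set a : 'I_(K + lam) | a < j] = [set a : 'I_(K + lam) | a < j].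
    by apply/setP => a; rewrite !inE decoy_mem lt_it.
  exact: card_ord_lt (leq_trans le_jK (leq_addr _ _)).
case: ifP => lt_is //; apply/eqP; rewrite cards_eq0; apply/eqP/setP => a.
by rewrite !inE decoy_mem lt_is ltnNge le_ti /=; lia.
Qed.

End DecoyProfile.

Definition AV_violation (alpha : rat) (lam k : nat) : Prop :=
  exists (n m : nat) (P : profile n m) (r : seq 'I_m) (N' : {set 'I_n}),
    [/\ (0 < n)%N, valid_profile P, AV_output P r, significant P alpha lam N' &
        (avg P N' (top_k r k) < lam%:R)%R].

Lemma decoy_violation {alpha : rat} {lam n s : nat} (K t : nat) {j : nat} :
  (0 < n)%N -> (alpha * n%:R = s%:R)%R -> (t <= s)%N -> (s <= n)%N -> (0 < lam)%N ->
  (j <= K)%N -> (s < n -> 0 < K)%N -> (s <= t + (n - s))%N ->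
  ((t * j)%:R / s%:R < lam%:R :> rat)%R -> AV_violation alpha lam j.
Proof.
move=> n_gt0 alpha_n le_ts le_sn lam_gt0 le_jK K_gt0 decoys_first avg_lt.
exists n, (K + lam), (decoy_profile n K lam s t), (enum 'I_(K + lam)),
  [set i : 'I_n | i < s]; split => //.
- exact: decoy_valid.
- exact: decoy_AV_output.
- by split; [rewrite card_ord_lt // alpha_n ceil_natr | exact: decoy_cohesiveness].
- by rewrite decoy_avg.
Qed.

Lemma pos_rat_frac {alpha : rat} : (0 < alpha)%R ->
  exists n s : nat, [/\ (0 < n)%N, (0 < s)%N & (alpha * n%:R = s%:R)%R].
Proof.
move=> alpha_gt0; exists `|denq alpha|%N, `|numq alpha|%N.
have den_gt0 := denq_gt0 alpha; have num_gt0 : (0 < numq alpha)%R by rewrite numq_gt0.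
rewrite !absz_gt0 !lt0r_neq0 //; split => //.
by rewrite !natr_absz !gtr0_norm // -{1}(divq_num_den alpha) divfK // intr_eq0 gt_eqF.
Qed.

Lemma AV_violation_ceil_pred (alpha : rat) (lam : nat) :
  (1 / 2 < alpha)%R -> (alpha <= 1)%R -> (0 < lam)%N ->
  AV_violation alpha lam (`|Num.ceil (lam%:R * alpha / (2 * alpha - 1))|%N).-1.
Proof.
move=> gt_alpha_half le_alpha1 lam_gt0.
set x := (lam%:R * alpha / (2 * alpha - 1))%R; set k' := (`|Num.ceil x|%N).-1.
have alpha_gt0 : (0 < alpha)%R by lra.
have [n [s [n_gt0 s_gt0 alpha_n]]] := pos_rat_frac alpha_gt0.
have n_gt0R : (0 < n%:R :> rat)%R by rewrite ltr0n.
have lam_ge1 : (1 <= lam%:R :> rat)%R by rewrite ler1n.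
have le_sn : (s <= n)%N by rewrite -(ler_nat rat) -alpha_n; nra.
have lt_n_2s : (n < 2 * s)%N by rewrite -(ltr_nat rat) natrM -alpha_n; nra.
have k'_lt : (k'%:R * (2 * alpha - 1) < lam%:R * alpha :> rat)%R.
  rewrite -ltr_pdivlMr; last lra.
  by apply: absz_ceil_pred_lt; rewrite divr_gt0 ?mulr_gt0 ?ltr0n //; lra.
apply: (decoy_violation k' (2 * s - n) n_gt0 alpha_n) => //.
- lia.
- move=> lt_sn; have : (1 < Num.ceil x)%R.
    have lt_alpha1 : (alpha < 1)%R by rewrite -(ltr_nat rat) -alpha_n in lt_sn; nra.
    by rewrite ceil_gt_int ltr_pdivlMr; nra.
  rewrite /k'; lia.
- lia.
rewrite ltr_pdivrMr ?ltr0n // natrM natrB ?natrM; last lia.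
rewrite -alpha_n; nra.
Qed.

Lemma AV_violation_below_half (alpha : rat) (lam k : nat) :
  (0 < alpha)%R -> (alpha < 1 / 2)%R -> (0 < lam)%N -> AV_violation alpha lam k.
Proof.
move=> alpha_gt0 lt_alpha_half lam_gt0.
have [n [s [n_gt0 _ alpha_n]]] := pos_rat_frac alpha_gt0.
have n_gt0R : (0 < n%:R :> rat)%R by rewrite ltr0n.
have lt_2s_n : (2 * s < n)%N by rewrite -(ltr_nat rat) natrM -alpha_n; nra.
apply: (decoy_violation k.+1 0 n_gt0 alpha_n) => //; try lia.
by rewrite mul0n mul0r ltr0n.
Qed.

Lemma not_AV_group_representation (kappa : rat -> nat -> nat) :
  ~ AV_group_representation kappa.
Proof.
move=> representation.
have third_gt0 : (0 < 1 / 3 :> rat)%R by lra.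
have third_le1 : (1 / 3 <= 1 :> rat)%R by lra.
have [||n [m [P [r [N' [n_gt0 valid_P AV_r significant_N' avg_lt]]]]]] :=
  AV_violation_below_half (1 / 3) 1 (kappa (1 / 3)%R 1) third_gt0; [lra | by [] |].
move: (representation n m P r n_gt0 valid_P AV_r _ _ N' third_gt0 third_le1 significant_N').
by rewrite leNgt avg_lt.
Qed.

Theorem theorem2 :
  (* (a) *)
  (forall (alpha : rat) (lam : nat),
     (1 / 2 < alpha)%R -> (alpha <= 1)%R ->
     let k := `|Num.ceil (lam%:R * alpha / (2 * alpha - 1))|%N in
     forall (n m : nat) (P : profile n m) (r : seq 'I_m) (N' : {set 'I_n}),
       (0 < n)%N -> valid_profile P -> AV_output P r ->
       significant P alpha lam N' ->
       (lam%:R <= avg P N' (top_k r k))%R)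
  /\
  (* (b) *)
  (forall (alpha : rat) (lam : nat),
     (1 / 2 < alpha)%R -> (alpha <= 1)%R -> (0 < lam)%N ->
     let k' := (`|Num.ceil (lam%:R * alpha / (2 * alpha - 1))|%N).-1 in
     exists (n m : nat) (P : profile n m) (r : seq 'I_m) (N' : {set 'I_n}),
       [/\ (0 < n)%N, valid_profile P, AV_output P r,
           significant P alpha lam N' &
           (avg P N' (top_k r k') < lam%:R)%R])
  /\
  (* (c) *)
  (forall (alpha : rat) (lam k : nat),
     (0 < alpha)%R -> (alpha < 1 / 2)%R -> (0 < lam)%N ->
     exists (n m : nat) (P : profile n m) (r : seq 'I_m) (N' : {set 'I_n}),
       [/\ (0 < n)%N, valid_profile P, AV_output P r,
           significant P alpha lam N' &
           (avg P N' (top_k r k) < lam%:R)%R])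
  /\
  (* (c), "in particular" *)
  (forall kappa : rat -> nat -> nat, ~ AV_group_representation kappa).
Proof.
split; first exact: AV_avg_top_ceil_ge.
split; first exact: AV_violation_ceil_pred.
split; first exact: AV_violation_below_half.
exact: not_AV_group_representation.
Qed.
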